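(* For every $\omega\in\{0,1\}^n$, the stabilization time of $\omega$ equals $\mathrm{Depth}(Y(\omega))$.
   Context: $\mathbb N=\{1,2,\dots\}$. A Young diagram is a finite down-closed set $Y\subseteq\mathbb N\times\mathbb N$ (i.e. $(i,j)\in Y$, $i'\le i$, $j'\le j$ imply $(i',j')\in Y$). For $\omega\in\{0,1\}^n$ with $U$ ones, $Y(\omega)=\{(i,j)\in\mathbb N\times\mathbb N: i\le n-U,\ j\le\text{the number of 1's of }\omega\text{ after the }i\text{-th 0 of }\omega\}$. For nonempty $Y$, $\mathrm{Depth}(Y)=\max\{i+j-1:(i,j)\in Y\}$; $\mathrm{Depth}(\emptyset)=0$. One step of the evolution replaces simultaneously every occurrence of the consecutive substring ''01'' by ''10''; the stabilization time is the number of steps needed to reach a string of the form $1\cdots10\cdots0$. *)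

(* Binary strings are [seq bool]: 0 = false, 1 = true. *)
From mathcomp Require Import all_boot.
Set Implicit Arguments. Unset Strict Implicit. Unset Printing Implicit Defensive.

(* One step of the evolution: replace simultaneously every occurrence of the
   consecutive substring "01" by "10".  Occurrences of "01" never overlap,
   so a left-to-right scan performs all replacements simultaneously. *)
Fixpoint step (s : seq bool) : seq bool :=
  match s with
  | false :: true :: s' => true :: false :: step s'
  | x :: s' => x :: step s'
  | [::] => [::]
  end.

Definition stable (s : seq bool) : Prop :=
  exists a b, s = nseq a true ++ nseq b false.

Definition is_stab_time (w : seq bool) (t : nat) : Prop :=
  stable (iter t step w) /\ forall k, k < t -> ~ stable (iter k step w).

Fixpoint ones_after_zeros (w : seq bool) : seq nat :=
  match w with
  | [::] => [::]
  | false :: s => count id s :: ones_after_zeros s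
  | true :: s => ones_after_zeros s
  end.

Definition ones_after (w : seq bool) (i : nat) : nat :=
  nth 0 (ones_after_zeros w) i.-1.

Definition Yw (w : seq bool) : seq (nat * nat) :=
  [seq (i, j) | i <- iota 1 (size w - count id w), j <- iota 1 (ones_after w i)].

Definition Depth (Y : seq (nat * nat)) : nat :=
  \max_(p <- Y) (p.1 + p.2 - 1).

From mathcomp Require Import all_boot.
From mathcomp Require Import zify.

(* We introduce the recursive potential [settle_time w]:
   for [w = 0 :: s] it is 0 if [s] has no 1's, and otherwise
   [max (#1's of s) (settle_time s + 1)] (the leading 0 must let every 1 of
   [s] pass, and cannot overtake the 0 behind it); a leading 1 contributes
   nothing.  Three facts about it give the dynamics:
   - one evolution step decreases it by exactly one (while positive), using
     that a step preserves the number of 1's;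
   - it vanishes exactly on the stable strings 1...10...0.
   Hence the stabilization time of [w] is [settle_time w].  On the diagram
   side, [Y(w)] is the diagram whose i-th row has length "number of 1's
   after the i-th 0"; for any sequence of row lengths [L] the depth of the
   diagram is [max_i (i + L_i)] over the nonempty rows, and unfolding this
   maximum along [w] gives exactly the recursion of [settle_time]. *)

(* The potential: the number of steps still needed to reach 1...10...0. *)
Fixpoint settle_time (w : seq bool) : nat :=
  match w with
  | [::] => 0
  | true :: s => settle_time s
  | false :: s =>
      if count id s == 0 then 0 else maxn (count id s) (settle_time s).+1
  end.

(* One evolution step only moves 1's, so their number is invariant. *)
Lemma count_step (w : seq bool) : count id (step w) = count id w.
Proof.
elim: {w}(size w) {-2}w (leqnn (size w)) => [|n IH] [|[] s] //= Hs.
- by rewrite IH.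
- case: s Hs => [|[] s] //= Hs; first by rewrite IH //; lia.
  by rewrite (IH (false :: s)).
Qed.

Lemma settle_time_no_ones (w : seq bool) :
  count id w = 0 -> settle_time w = 0.
Proof. by elim: w => [|[] s IH] //=; rewrite add0n => ->. Qed.

Lemma settle_time_step (w : seq bool) :
  settle_time (step w) = (settle_time w).-1.
Proof.
elim: {w}(size w) {-2}w (leqnn (size w)) => [|n IH] [|[] s] //= Hs.
  by rewrite IH.
case: s Hs => [|[] s] // Hs.
- (* 0 1 s  ~>  1 0 (step s) *)
  rewrite [step _]/= [settle_time (true :: _)]/= IH; last by move: Hs => /=; lia.
  rewrite count_step /=.
  have [Hc|Hc] := eqVneq (count id s) 0; first by rewrite (settle_time_no_ones _ Hc).
  by case: (settle_time s) => [|h] /=; lia.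
- (* 0 0 s  ~>  0 (step (0 s)) *)
  have IHs := IH (false :: s) Hs; have Hcount := count_step (false :: s).
  (* generalize the step so that [/=] does not unfold it *)
  move: (step (false :: s)) IHs Hcount => t IHs Hcount.
  by rewrite /= Hcount IHs /=; case: eqP => //; lia.
Qed.

Lemma settle_time_iter (k : nat) (w : seq bool) :
  settle_time (iter k step w) = settle_time w - k.
Proof. by elim: k => [|k IH] /=; rewrite ?subn0 // settle_time_step IH subnS. Qed.

Lemma stable_cons_true (s : seq bool) : stable (true :: s) <-> stable s.
Proof.
split; last by case=> a [b ->]; exists a.+1, b.
case=> [[|a] [b E]]; first by case: b E.
by exists a, b; case: E.
Qed.

Lemma stable_cons_false (s : seq bool) : stable (false :: s) <-> count id s = 0.
Proof.
split; first by case=> [[|a] [[|b] //= [->]]]; rewrite count_nseq mul0n.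
move=> Hc; exists 0, (size s).+1; congr cons.
by elim: s Hc => [|[] s IH] //= Hc; rewrite -IH.
Qed.

Lemma stable_settle_time (w : seq bool) : stable w <-> settle_time w = 0.
Proof.
elim: w => [|[] s IH] /=.
- by split=> // _; exists 0, 0.
- by rewrite stable_cons_true.
- rewrite stable_cons_false; case: eqP => // Hc.
  by split=> //; lia.
Qed.

Definition diagram (L : seq nat) : seq (nat * nat) :=
  [seq (i, j) | i <- iota 1 (size L), j <- iota 1 (nth 0 L i.-1)].

(* The depth of that diagram, as the largest [i + L_i] over nonempty rows
   (rows indexed from 0 here). *)
Definition rows_depth (L : seq nat) : nat :=
  \max_(i <- iota 0 (size L)) (if nth 0 L i == 0 then 0 else i + nth 0 L i).

Lemma row_depth (i a : nat) : 0 < i ->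
  \max_(j <- iota 1 a) (i + j - 1) = if a == 0 then 0 else i + a - 1.
Proof.
move=> Hi; elim: a => [|a IH]; first by rewrite big_nil.
have -> : iota 1 a.+1 = iota 1 a ++ [:: 1 + a] by rewrite -[a.+1]addn1 iotaD.
rewrite big_cat big_seq1 IH /=.
by case: eqP => _; lia.
Qed.

Lemma Depth_diagram (L : seq nat) : Depth (diagram L) = rows_depth L.
Proof.
rewrite /Depth /diagram big_allpairs_dep /rows_depth (iotaDl 1 0) big_map.
apply: eq_bigr => i _; rewrite row_depth // add1n /=.
by case: eqP => _ //; lia.
Qed.

(* Shifting a diagram down by one row increases every positive depth by one. *)
Definition succ_pos (x : nat) : nat := if x == 0 then 0 else x.+1.

Lemma big_max_succ_pos (I : Type) (r : seq I) (f : I -> nat) :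
  \max_(i <- r) succ_pos (f i) = succ_pos (\max_(i <- r) f i).
Proof.
elim: r => [|i r IH]; first by rewrite !big_nil.
rewrite !big_cons IH /succ_pos.
case: (f i) => [|x]; case: (\max_(j <- r) f j) => [|y] //=.
by rewrite !maxnSS.
Qed.

Lemma rows_depth_cons (a : nat) (L : seq nat) :
  rows_depth (a :: L) = maxn a (succ_pos (rows_depth L)).
Proof.
rewrite /rows_depth /= big_cons (iotaDl 1 0) big_map -big_max_succ_pos /=.
congr maxn; first by case: a.
apply: eq_bigr => i _; rewrite /succ_pos add0n.
by case: (nth 0 L i) => [|x] //=; rewrite !addnS /=; lia.
Qed.

Lemma rows_depth_ones_after_zeros (w : seq bool) :
  rows_depth (ones_after_zeros w) = settle_time w.
Proof.
elim: w => [|[] s IH] //=; first by rewrite /rows_depth big_nil.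
rewrite rows_depth_cons IH /succ_pos.
have [Hc|Hc] := eqVneq (count id s) 0; first by rewrite Hc settle_time_no_ones.
by case: eqP => [->|_] //=; lia.
Qed.

Lemma size_ones_after_zeros (w : seq bool) :
  size (ones_after_zeros w) = size w - count id w.
Proof. by elim: w => [|[] s IH] //=; have := count_size id s; lia. Qed.

Lemma Yw_diagram (w : seq bool) : Yw w = diagram (ones_after_zeros w).
Proof. by rewrite /Yw /diagram size_ones_after_zeros. Qed.

Lemma Depth_Yw (w : seq bool) : Depth (Yw w) = settle_time w.
Proof. by rewrite Yw_diagram Depth_diagram rows_depth_ones_after_zeros. Qed.

Theorem proposition2p7 (n : nat) (w : seq bool) (hw : size w = n) :
  is_stab_time w (Depth (Yw w)).
Proof.
rewrite Depth_Yw; split.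
- by apply/stable_settle_time; rewrite settle_time_iter subnn.
- move=> k Hk /stable_settle_time; rewrite settle_time_iter; lia.
Qed.
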